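(* Let $\Gamma$ be a distance-regular graph with diameter $D\ge3$ and $a_1\ne0$. Let $\sigma_0,\dots,\sigma_D$ be a feasible pseudo cosine sequence, let $\rho_0,\dots,\rho_D$ be a nontrivial pseudo cosine sequence such that $\sigma_0,\dots,\sigma_D$ and $\rho_0,\dots,\rho_D$ form a tight pair, and let $\varepsilon$ be the corresponding auxiliary parameter. Then $\sigma_j-\varepsilon\sigma_{j-1}\ne0$ for $1\le j\le D$ and $$\rho_i=\prod_{j=1}^{i}\frac{\sigma_{j-1}-\varepsilon\sigma_j}{\sigma_j-\varepsilon\sigma_{j-1}}\qquad(0\le i\le D).$$
   Context: $\Gamma$ is a finite connected undirected graph without loops or multiple edges, distance-regular with diameter $D$, intersection numbers $a_i,b_i,c_i$ ($c_0=0$, $b_D=0$), valency $k$, $c_i+a_i+b_i=k$. For $\theta\in\mathbb{R}$ the pseudo cosine sequence for $\theta$ is the sequence of reals $\sigma_0,\dots,\sigma_D$ with $\sigma_0=1$ and $c_i\sigma_{i-1}+a_i\sigma_i+b_i\sigma_{i+1}=\theta\sigma_i$ for $0\le i\le D-1$; nontrivial means $\sigma_1\ne1$. Pseudo cosine sequences $\sigma_i$, $\rho_i$ form a tight pair if $(\sigma_i\rho_i)_{i=0}^D$ is a pseudo cosine sequence. For a tight pair of nontrivial pseudo cosine sequences, an auxiliary parameter is a real $\varepsilon$ with $\sigma_i\rho_i-\sigma_{i-1}\rho_{i-1}=\varepsilon(\sigma_{i-1}\rho_i-\sigma_i\rho_{i-1})$ for $1\le i\le D$. When $a_1\ne0$: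 a nontrivial pseudo cosine sequence is tight if some nontrivial pseudo cosine sequence forms a tight pair with it; a pseudo cosine sequence $\sigma_0,\dots,\sigma_D$ is feasible if it is tight and $\sigma_{i-1}\ne\sigma_{i+1}$ for $1\le i\le D-1$. *)

From HB Require Import structures.
From mathcomp Require Import all_boot all_order all_algebra.
Set Implicit Arguments. Unset Strict Implicit. Unset Printing Implicit Defensive.
Import Order.TTheory GRing.Theory Num.Theory.
Local Open Scope ring_scope.

Definition simple_graph (T : finType) (e : rel T) : Prop :=
  symmetric e /\ irreflexive e.

Definition connected_graph (T : finType) (e : rel T) : Prop :=
  forall x y : T, connect e x y.

Definition walkn (T : finType) (e : rel T) (x y : T) (n : nat) : bool :=
  [exists p : n.-tuple T, path e x p && (last x p == y)].

(* graph distance: the least n with a walk of length n from x to y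
   (searched below #|T|, which suffices in a connected graph) *)
Definition gdist (T : finType) (e : rel T) (x y : T) : nat :=
  find (walkn e x y) (iota 0 #|T|).

Definition distance_regular (T : finType) (e : rel T) (D : nat)
    (a b c : nat -> nat) : Prop :=
  [/\ simple_graph e, connected_graph e,
      (forall x y, (gdist e x y <= D)%N), (exists x y, gdist e x y = D) &
      forall x y : T, let i := gdist e x y in
        [/\ #|[set z | e y z & (gdist e x z).+1 == i]| = c i,
            #|[set z | e y z & gdist e x z == i]| = a i &
            #|[set z | e y z & gdist e x z == i.+1]| = b i]].

Section Pseudo.
Variable R : realFieldType.
Variables (D : nat) (a b c : nat -> nat).

Definition pseudo_cosine_for (theta : R) (s : nat -> R) : Prop :=
  s 0%N = 1 /\
  forall i, (i < D)%N ->
    (c i)%:R * s i.-1 + (a i)%:R * s i + (b i)%:R * s i.+1 = theta * s i.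

Definition pseudo_cosine (s : nat -> R) : Prop :=
  exists theta, pseudo_cosine_for theta s.

Definition nontrivial_pc (s : nat -> R) : Prop :=
  pseudo_cosine s /\ s 1%N != 1.

Definition tight_pair (s r : nat -> R) : Prop :=
  pseudo_cosine s /\ pseudo_cosine r /\ pseudo_cosine (fun i => s i * r i).

Definition auxiliary_parameter (s r : nat -> R) (eps : R) : Prop :=
  forall i, (1 <= i <= D)%N ->
    s i * r i - s i.-1 * r i.-1 = eps * (s i.-1 * r i - s i * r i.-1).

Definition tight_pc (s : nat -> R) : Prop :=
  nontrivial_pc s /\ exists r, nontrivial_pc r /\ tight_pair s r.

Definition feasible_pc (s : nat -> R) : Prop :=
  pseudo_cosine s /\ tight_pc s /\
  forall i, (1 <= i <= D.-1)%N -> s i.-1 != s i.+1.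

End Pseudo.

From HB Require Import structures.
From mathcomp Require Import all_boot all_order all_algebra.
From mathcomp Require Import zify ring lra.
Import Order.TTheory GRing.Theory Num.Theory.

(* Rearranged, the auxiliary-parameter identity reads
   rho_i (sigma_i - eps sigma_(i-1)) = rho_(i-1) (sigma_(i-1) - eps sigma_i),
   so the product formula follows by induction once every factor
   sigma_i - eps sigma_(i-1) is nonzero.  If one vanishes, the same identity
   gives sigma_(i-1) rho_(i-1) (eps^2 - 1) = 0.  Now rho_(i-1) <> 0, since a
   zero of rho at an inner index forces sigma_(i-1) = sigma_(i+1) through the
   recurrences of rho and sigma rho; and eps <> 1, -1, since for eps = +-1 the
   identity factors as (sigma_i -+ sigma_(i-1)) (rho_i +- rho_(i-1)) = 0,
   which for i = 1, 2, 3 contradicts the recurrences, as a_1 > 0.  Hence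
   sigma_(i-1) = sigma_i = 0, and the recurrence at i - 1 yields
   sigma_(i-2) = 0 = sigma_i, against feasibility. *)

Set Implicit Arguments.
Unset Strict Implicit.
Unset Printing Implicit Defensive.

Section Walks.
Variables (T : finType) (e : rel T).

Lemma walknP x y n :
  reflect (exists p : seq T, [/\ size p = n, path e x p & last x p = y])
          (walkn e x y n).
Proof.
apply: (iffP existsP) => [[p /andP[hp /eqP hl]]|[p [hs hp hl]]].
  by exists (val p); rewrite size_tuple.
have hs' : size p == n by apply/eqP.
by exists (Tuple hs'); rewrite /= hp hl eqxx.
Qed.

Lemma walkn1 x y : walkn e x y 1 = e x y.
Proof.
apply/walknP/idP => [[p [hs hp <-]]|exy].
  by case: p hs hp => [|z [|]] //= _; rewrite andbT.
by exists [:: y]; rewrite /= exy.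
Qed.

Lemma walkn_cat x y z n m :
  walkn e x y n -> walkn e y z m -> walkn e x z (n + m).
Proof.
move=> /walknP[p [<- hp <-]] /walknP[q [<- hq <-]]; apply/walknP.
by exists (p ++ q); rewrite size_cat cat_path last_cat hp hq.
Qed.

Lemma walkn_split x z n m :
  walkn e x z (n + m) -> exists y, walkn e x y n /\ walkn e y z m.
Proof.
move=> /walknP[p [hs hp hl]]; exists (last x (take n p)).
rewrite -(cat_take_drop n p) cat_path in hp; case/andP: hp => hp1 hp2.
split; apply/walknP.
  by exists (take n p); rewrite size_take hs; split=> //; case: ifP => //; lia.
exists (drop n p); split=> //; first by rewrite size_drop hs; lia.
by rewrite -hl -{3}(cat_take_drop n p) last_cat.
Qed.

Hypothesis e_connected : connected_graph e.

Lemma walkn_small x y : exists2 n, n < #|T| & walkn e x y n.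
Proof.
have /connectP[p hp ->] := e_connected x y.
have [q hq uq _] := shortenP hp.
exists (size q); last by apply/walknP; exists q.
by have := max_card (mem (x :: q)); rewrite (card_uniqP uq).
Qed.

Lemma has_walkn_small x y : has (walkn e x y) (iota 0 #|T|).
Proof.
have [n ltn w] := walkn_small x y.
by apply/hasP; exists n; rewrite // mem_iota.
Qed.

Lemma gdist_lt_card x y : gdist e x y < #|T|.
Proof. by have := has_walkn_small x y; rewrite has_find size_iota. Qed.

Lemma gdist_walkn x y : walkn e x y (gdist e x y).
Proof.
by have := nth_find 0 (has_walkn_small x y); rewrite nth_iota ?gdist_lt_card.
Qed.

Lemma gdist_min x y n : walkn e x y n -> gdist e x y <= n.
Proof.
move=> w; have [lt_n|] := ltnP n #|T|; last by have := gdist_lt_card x y; lia.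
rewrite leqNgt; apply/negP => lt_n_d.
by have := before_find 0 lt_n_d; rewrite nth_iota // w.
Qed.

Lemma gdistxx x : gdist e x x = 0.
Proof. by apply/eqP; rewrite -leqn0 gdist_min //; apply/walknP; exists [::]. Qed.

Lemma gdist_eq0 x y : gdist e x y = 0 -> y = x.
Proof.
move=> d0; have /walknP[p [hs _ <-]] := gdist_walkn x y.
by move: hs; rewrite d0 => /size0nil ->.
Qed.

Lemma gdist_adj x y z : e y z -> gdist e x z <= (gdist e x y).+1.
Proof.
by move=> eyz; rewrite -addn1 gdist_min // (walkn_cat (gdist_walkn x y)) ?walkn1.
Qed.

Hypothesis e_sym : symmetric e.

Lemma card_neighbours x y : let i := gdist e x y in
  #|[set z | e y z]| = #|[set z | e y z & (gdist e x z).+1 == i]| +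
    #|[set z | e y z & gdist e x z == i]| +
    #|[set z | e y z & gdist e x z == i.+1]|.
Proof.
move=> i; set A := [set z | e y z].
rewrite -(cardsID [set z | (gdist e x z).+1 == i] A).
rewrite -(cardsID [set z | gdist e x z == i] (A :\: _)) addnA.
have near z : e y z -> gdist e x z <= i.+1 /\ i <= (gdist e x z).+1.
  by move=> eyz; rewrite gdist_adj // gdist_adj // e_sym.
congr (_ + _ + _); apply: eq_card => z; rewrite !inE;
  case eyz: (e y z); rewrite //= ?andbF //; have [] := near z eyz;
  repeat case: eqP => /=; lia.
Qed.

End Walks.

Section IntersectionNumbers.
Variables (T : finType) (e : rel T) (D : nat) (a b c : nat -> nat).
Hypothesis drg : distance_regular e D a b c.

Lemma drg_valency x y :
  #|[set z | e y z]| = c (gdist e x y) + a (gdist e x y) + b (gdist e x y).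
Proof.
have [[e_sym _] e_conn _ _ reg] := drg.
by rewrite (card_neighbours e_conn e_sym x y); have [-> -> ->] := reg x y.
Qed.

Lemma drg_c0 : c 0 = 0.
Proof.
have [[_ _] e_conn _ [x _] reg] := drg.
case: (reg x x); rewrite gdistxx // => <- _ _.
by apply/eqP; rewrite cards_eq0; apply/eqP/setP => z; rewrite !inE andbF.
Qed.

Lemma drg_a0 : a 0 = 0.
Proof.
have [[_ e_irr] e_conn _ [x _] reg] := drg.
case: (reg x x); rewrite gdistxx // => _ <- _.
apply/eqP; rewrite cards_eq0; apply/eqP/setP => z; rewrite !inE.
by apply/andP => -[exz /eqP/(gdist_eq0 e_conn) zx]; rewrite zx e_irr in exz.
Qed.

Lemma drg_gdist_attained i : i <= D -> exists x y, gdist e x y = i.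
Proof.
move=> le_iD; have [_ e_conn le_D [x [y dxy]] _] := drg; exists x.
have := gdist_walkn e_conn x y; rewrite dxy -(subnKC le_iD).
case/walkn_split=> z [wxz wzy]; exists z; apply/eqP.
rewrite eqn_leq gdist_min //= leqNgt; apply/negP => lt_dxz_i.
have := gdist_min e_conn (walkn_cat (gdist_walkn e_conn x z) wzy).
by rewrite dxy; lia.
Qed.

Lemma drg_valency_const i : i <= D -> c i + a i + b i = b 0.
Proof.
move=> /drg_gdist_attained[x [y <-]].
have [_ e_conn _ _ _] := drg.
by rewrite -drg_valency (drg_valency y y) gdistxx // drg_c0 drg_a0.
Qed.

Lemma drg_c_gt0 i : 1 <= i <= D -> 0 < c i.
Proof.
case/andP=> ge_i1 /drg_gdist_attained[x [y dxy]].
have [[e_sym _] e_conn _ _ reg] := drg.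
case: (reg x y); rewrite dxy => <- _ _.
have := gdist_walkn e_conn x y; rewrite dxy -(subnK ge_i1).
case/walkn_split=> z [wxz]; rewrite walkn1 => ezy.
apply/card_gt0P; exists z; rewrite !inE e_sym ezy /=.
have := gdist_min e_conn wxz; have := gdist_adj e_conn x ezy.
by rewrite dxy => *; apply/eqP; lia.
Qed.

End IntersectionNumbers.

Local Open Scope ring_scope.

Section PseudoCosine.
Variables (R : realFieldType) (D : nat) (a b c : nat -> nat).

Local Notation pcf := (@pseudo_cosine_for R D a b c).

Lemma auxiliary_parameter_prod (s r : nat -> R) (eps : R) :
    r 0%N = 1 -> auxiliary_parameter D s r eps ->
    (forall j, (1 <= j <= D)%N -> s j - eps * s j.-1 != 0) ->
  forall i, (i <= D)%N ->
    r i = \prod_(1 <= j < i.+1) ((s j.-1 - eps * s j) / (s j - eps * s j.-1)).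
Proof.
move=> r0 eps_aux den_neq0; elim=> [|i IHi] lt_iD; first by rewrite big_geq.
rewrite big_nat_recr //= -IHi 1?ltnW // mulrA.
have den := den_neq0 i.+1 lt_iD; apply: (mulIf den); rewrite divfK //.
by have := eps_aux i.+1 lt_iD => /=; lra.
Qed.

Hypotheses (c0 : c 0 = 0%N) (a0 : a 0 = 0%N).
Hypothesis valency : forall i, (i <= D)%N -> (c i + a i + b i = b 0)%N.
Hypothesis c_gt0 : forall i, (1 <= i <= D)%N -> (0 < c i)%N.

Local Notation k := ((b 0%N)%:R : R).

Lemma valencyR i : (i <= D)%N -> (c i)%:R + (a i)%:R + (b i)%:R = k.
Proof. by move=> le_iD; rewrite -!natrD valency. Qed.

Lemma pseudo_cosine_eigenvalue (th : R) (s : nat -> R) :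
  (0 < D)%N -> pcf th s -> th = k * s 1%N.
Proof.
by move=> D_gt0 [s0 /(_ 0%N D_gt0)]; rewrite c0 a0 s0 !mul0r !add0r mulr1.
Qed.

Lemma tight_partner_neq0 (s r : nat -> R) (thr thsr : R) :
    pcf thr r -> pcf thsr (fun i => s i * r i) ->
    (forall i, (1 <= i <= D.-1)%N -> s i.-1 != s i.+1) ->
  forall i, (i <= D.-1)%N -> r i != 0.
Proof.
move=> [r0 r_rec] [_ sr_rec] s_feas; elim=> [|i IHi] le_iD.
  by rewrite r0 oner_eq0.
apply/eqP => ri1; have ri := IHi (ltnW le_iD).
have lt_iD : (i.+1 < D)%N by lia.
have := r_rec _ lt_iD; have := sr_rec _ lt_iD.
rewrite /= ri1 !(mulr0, mul0r, addr0) => sr_eq r_eq.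
have : (c i.+1)%:R * r i * (s i.+2 - s i) =
    s i.+2 * ((c i.+1)%:R * r i + (b i.+1)%:R * r i.+2) -
    ((c i.+1)%:R * (s i * r i) + (b i.+1)%:R * (s i.+2 * r i.+2)) by ring.
rewrite r_eq sr_eq mulr0 subr0.
have s_neq : s i.+2 != s i.
  by rewrite eq_sym; apply: (s_feas i.+1); apply/andP; split=> //; lia.
apply/eqP; rewrite !mulf_eq0 (negbTE ri) subr_eq0 (negbTE s_neq) !orbF.
by rewrite pnatr_eq0 -lt0n c_gt0 //; lia.
Qed.

Lemma alternating_or_constant_contra (x y : nat -> R) (thx thy : R) :
    (3 <= D)%N -> (0 < a 1)%N -> pcf thx x -> pcf thy y -> y 1%N != 1 ->
    (forall i, (1 <= i <= 3)%N -> (x i + x i.-1) * (y i - y i.-1) = 0) ->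
  False.
Proof.
move=> D_ge3 a1_gt0 x_pc y_pc y1_neq1 alt.
have D_gt0 : (0 < D)%N by lia.
have thxE := pseudo_cosine_eigenvalue D_gt0 x_pc.
have thyE := pseudo_cosine_eigenvalue D_gt0 y_pc.
case: x_pc y_pc => [x0 x_rec] [y0 y_rec]; subst thx thy.
have [lt1D lt2D] : (1 < D)%N /\ (2 < D)%N by lia.
have /= X1 := x_rec _ lt1D; have /= X2 := x_rec _ lt2D.
have /= Y1 := y_rec _ lt1D; have /= Y2 := y_rec _ lt2D.
have /= A1 := alt 1%N isT; have /= A2 := alt 2%N isT; have /= A3 := alt 3%N isT.
rewrite x0 y0 in X1 Y1 A1.
have k1 := valencyR (ltnW lt1D); have k2 := valencyR (ltnW lt2D).
have c1_gt0 : 0 < (c 1)%:R :> R by rewrite ltr0n c_gt0 //; lia.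
have c2_gt0 : 0 < (c 2)%:R :> R by rewrite ltr0n c_gt0 //; lia.
have a1_gt0' : 0 < (a 1)%:R :> R by rewrite ltr0n.
have a2_ge0 : 0 <= (a 2)%:R :> R := ler0n _ _.
have b1_ge0 : 0 <= (b 1)%:R :> R := ler0n _ _.
have x1N : x 1%N = -1.
  by move/eqP: A1; rewrite mulf_eq0 subr_eq0 (negbTE y1_neq1) orbF addr_eq0 => /eqP.
rewrite x1N in X1 X2 A2.
(* X1 now reads b_1 (x_2 - 1) = 2 a_1. *)
have x2_gt1 : 1 < x 2%N by nra.
have y21 : y 2%N = y 1%N.
  by move/eqP: A2; rewrite mulf_eq0 subr_eq0 => /orP[/eqP|/eqP //]; lra.
rewrite y21 in Y1 Y2 A3.
(* x_3 = - x_2 turns X2 into c_2 (x_2 - 1) + 2 a_2 x_2 = 0, while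
   y_3 = y_2 = y_1 turns Y1 and Y2 into c_1 (1 - y_1) = 0. *)
move/eqP: A3; rewrite mulf_eq0 subr_eq0 addr_eq0 => /orP[/eqP x3E|/eqP y3E].
  by rewrite x3E in X2; nra.
by rewrite y3E in Y2; move/eqP: y1_neq1; nra.
Qed.

Section TightPair.
Variables (s r : nat -> R) (ths thr thsr eps : R).
Hypotheses (D_ge3 : (3 <= D)%N) (a1_gt0 : (0 < a 1)%N).
Hypotheses (s_pc : pcf ths s) (r_pc : pcf thr r).
Hypothesis sr_pc : pcf thsr (fun i => s i * r i).
Hypotheses (s1_neq1 : s 1%N != 1) (r1_neq1 : r 1%N != 1).
Hypothesis s_feasible : forall i, (1 <= i <= D.-1)%N -> s i.-1 != s i.+1.
Hypothesis eps_aux : auxiliary_parameter D s r eps.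

Lemma auxiliary_parameter_sqr_neq1 : eps ^+ 2 != 1.
Proof.
have aux i : (1 <= i <= 3)%N -> s i * r i - s i.-1 * r i.-1 =
    eps * (s i.-1 * r i - s i * r i.-1).
  by move=> /andP[ge_i1 le_i3]; apply: eps_aux; rewrite ge_i1 (leq_trans le_i3).
rewrite sqrf_eq1; apply/norP; split; apply/negP => /eqP epsE.
  apply: (alternating_or_constant_contra D_ge3 a1_gt0 r_pc s_pc s1_neq1) => i.
  by move/aux; rewrite epsE; lra.
apply: (alternating_or_constant_contra D_ge3 a1_gt0 s_pc r_pc r1_neq1) => i.
by move/aux; rewrite epsE; lra.
Qed.

Lemma auxiliary_denominator_neq0 j : (1 <= j <= D)%N -> s j - eps * s j.-1 != 0.
Proof.
case: j => [//|i] /= le_iD; apply/eqP => /eqP; rewrite subr_eq0 => /eqP si1.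
have ri : r i != 0 by apply: tight_partner_neq0 r_pc sr_pc s_feasible _ _; lia.
have : s i * r i * (eps ^+ 2 - 1) = 0.
  by have := @eps_aux i.+1 le_iD; rewrite /= si1; lra.
move/eqP; rewrite !mulf_eq0 (negbTE ri) subr_eq0 (negbTE auxiliary_parameter_sqr_neq1).
rewrite !orbF => /eqP si; rewrite si mulr0 in si1.
case: i si si1 le_iD {ri} => [|i] si si1 le_iD.
  by case: s_pc => s0 _; move: si; rewrite s0 => /eqP; rewrite oner_eq0.
have c_neq0 : (c i.+1)%:R != 0 :> R by rewrite pnatr_eq0 -lt0n c_gt0 //; lia.
have si0 : s i = 0.
  case: s_pc => _ /(_ i.+1 le_iD) /=; rewrite si si1 !mulr0 !addr0 => /eqP.
  by rewrite mulf_eq0 (negbTE c_neq0) => /eqP.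
have i1_feas : (1 <= i.+1 <= D.-1)%N by lia.
by have := s_feasible i1_feas; rewrite /= si0 si1 eqxx.
Qed.
End TightPair.


End PseudoCosine.

Theorem lemma15p3 (R : realFieldType) (T : finType) (e : rel T) (D : nat)
    (a b c : nat -> nat)
    (hG : distance_regular e D a b c) (hD : (3 <= D)%N) (ha1 : a 1%N != 0%N)
    (sigma rho : nat -> R) (eps : R)
    (hsig : feasible_pc (R:=R) D a b c sigma)
    (hrho : nontrivial_pc D a b c rho)
    (htp : tight_pair D a b c sigma rho)
    (heps : auxiliary_parameter D sigma rho eps) :
  (forall j, (1 <= j <= D)%N -> sigma j - eps * sigma j.-1 != 0) /\
  (forall i, (i <= D)%N ->
     rho i = \prod_(1 <= j < i.+1)
               ((sigma j.-1 - eps * sigma j) / (sigma j - eps * sigma j.-1))).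
Proof.
have [c0 a0] := (drg_c0 hG, drg_a0 hG).
have [valency c_gt0] := (drg_valency_const hG, drg_c_gt0 hG).
have a1_gt0 : (0 < a 1)%N by rewrite lt0n.
case: hsig => _ [[[_ s1_neq1] _] s_feasible]; case: hrho => _ r1_neq1.
case: htp => [[ths s_pc] [[thr r_pc] [thsr sr_pc]]].
have den_neq0 := auxiliary_denominator_neq0 c0 a0 valency c_gt0 hD a1_gt0
  s_pc r_pc sr_pc s1_neq1 r1_neq1 s_feasible heps.
split=> //; apply: auxiliary_parameter_prod den_neq0 => //.
by case: r_pc.
Qed.
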